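(* The single-mode creation operator $\hat a^\dagger$ has approximate operator coherent rank $2$, and for any integer $n\ge0$ and coefficients $b_0,\dots,b_n\in\mathbb C$ the operator $\sum_{l=0}^n b_l(\hat a^\dagger)^l$ has approximate operator coherent rank at most $n+1$.
   Context: Single mode with Fock basis $\{|n\rangle\}$, creation operator $\hat a^\dagger=\sum_{n\ge0}\sqrt{n+1}|n+1\rangle\langle n|$. Coherent state $|\alpha\rangle=e^{-|\alpha|^2/2}\sum_n\frac{\alpha^n}{\sqrt{n!}}|n\rangle$. A state has coherent rank $k$ if it is a superposition of $k$ coherent states; its approximate coherent rank is the smallest $k$ such that for every $\delta>0$ there is a coherent rank $k$ state with fidelity greater than $1-\delta$ to it (after normalization). An operator $\hat A$ has approximate operator coherent rank $\ell$ iff $\hat A|\alpha\rangle$ has approximate coherent rank at most $\ell$ for every coherent state $|\alpha\rangle$ (and this bound is attained for at least one coherent state). *)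

From Stdlib Require Import Reals List Factorial.
From Coquelicot Require Import Coquelicot.
Open Scope R_scope.

(* A single-mode state is represented by its Fock coefficients
   psi n = <n|psi>, i.e. a sequence nat -> C (all states used below are in l^2). *)
Definition state := nat -> C.
Definition operator := state -> state.

Definition coh (alpha : C) : state := fun n =>
  Cmult (RtoC (exp (- (Cmod alpha ^ 2) / 2) / sqrt (INR (Factorial.fact n)))) (Cpow alpha n).

Definition adag : operator := fun psi n =>
  match n with
  | O => RtoC 0
  | S m => Cmult (RtoC (sqrt (INR (S m)))) (psi m)
  end.

Definition adag_pow (l : nat) : operator := fun psi => Nat.iter l adag psi.

Fixpoint csum (f : nat -> C) (n : nat) : C :=
  match n with
  | O => f O
  | S m => Cplus (csum f m) (f (S m))
  end.

Definition poly_adag (b : nat -> C) (n : nat) : operator := fun psi k =>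
  csum (fun l => Cmult (b l) (adag_pow l psi k)) n.

Definition inner (psi phi : state) : C :=
  (Series (fun n => Re (Cmult (Cconj (psi n)) (phi n))),
   Series (fun n => Im (Cmult (Cconj (psi n)) (phi n)))).

Definition norm2 (psi : state) : R := Series (fun n => Cmod (psi n) ^ 2).

Definition fidelity (psi phi : state) : R :=
  (Cmod (inner psi phi)) ^ 2 / (norm2 psi * norm2 phi).

Definition nonzero (psi : state) : Prop := exists n, psi n <> RtoC 0.

Definition superpos (l : list (C * C)) : state := fun m =>
  fold_right (fun p acc => Cplus (Cmult (fst p) (coh (snd p) m)) acc) (RtoC 0) l.

Definition coh_rank_le (phi : state) (k : nat) : Prop :=
  nonzero phi /\ exists l : list (C * C), (length l <= k)%nat /\ phi = superpos l.

(* psi can be approximated to arbitrary fidelity by states of coherent rank <= k.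
   Convention: the zero vector counts as approximable (it is the empty superposition). *)
Definition approximable (psi : state) (k : nat) : Prop :=
  (forall n, psi n = RtoC 0) \/
  (forall delta : R, 0 < delta ->
     exists phi, coh_rank_le phi k /\ fidelity psi phi > 1 - delta).

Definition approx_coh_rank (psi : state) (k : nat) : Prop :=
  approximable psi k /\ forall j, (j < k)%nat -> ~ approximable psi j.

Definition approx_coh_rank_le (psi : state) (k : nat) : Prop :=
  exists j, (j <= k)%nat /\ approx_coh_rank psi j.

Definition op_approx_coh_rank_le (A : operator) (l : nat) : Prop :=
  forall alpha : C, approx_coh_rank_le (A (coh alpha)) l.

Definition op_approx_coh_rank (A : operator) (l : nat) : Prop :=
  op_approx_coh_rank_le A l /\ exists alpha : C, approx_coh_rank (A (coh alpha)) l.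

From Pilot Require Import Defs.
From Stdlib Require Import Reals List.
From Coquelicot Require Import Coquelicot.
From Stdlib Require Import Lra Lia Classical Factorial FunctionalExtensionality.
Open Scope R_scope.

(* The Fock coefficients of (a^dagger)^l |alpha> are e^{-|alpha|^2/2} / sqrt(m!) times
   (d/dalpha)^l alpha^m, so sum_l b_l (a^dagger)^l |alpha> is the combination sum_l b_l d^l/dalpha^l
   of derivatives of the unnormalised coherent state.  Replacing each derivative by the l-th
   forward difference with step eps uses only the n+1 coherent states at the nodes
   alpha + k eps (k <= n), and changes the m-th coefficient by at most
   C eps (|alpha| + n)^m / sqrt(m!), i.e. by O(eps) in l^2; fidelity is continuous in l^2.
   For the lower bound, a^dagger |0> = |1> has fidelity |beta|^2 e^{-|beta|^2} <= 1/2 with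
   every coherent state |beta>, so it is not a limit of single coherent states. *)

Ltac nonneg :=
  repeat first [apply pow2_ge_0 | apply Rmult_le_pos | apply Rplus_le_le_0_compat
               | apply pow_le | apply pos_INR | apply Cmod_ge_0 | apply Rlt_le, exp_pos | lra].

Lemma csum_ext (f g : nat -> C) n :
  (forall j, (j <= n)%nat -> f j = g j) -> csum f n = csum g n.
Proof.
  induction n as [|n IH]; intros H; simpl.
  - apply H; lia.
  - rewrite IH, (H (S n)); [reflexivity | lia | intros; apply H; lia].
Qed.

Lemma csum_scal (c : C) (f : nat -> C) n :
  csum (fun j => c * f j)%C n = (c * csum f n)%C.
Proof. induction n as [|n IH]; simpl; [|rewrite IH]; ring. Qed.

Lemma csum_plus (f g : nat -> C) n :
  csum (fun j => f j + g j)%C n = (csum f n + csum g n)%C.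
Proof. induction n as [|n IH]; simpl; [|rewrite IH]; ring. Qed.

Lemma csum_minus (f g : nat -> C) n :
  csum (fun j => f j - g j)%C n = (csum f n - csum g n)%C.
Proof. induction n as [|n IH]; simpl; [|rewrite IH]; ring. Qed.

Lemma csum_swap (f : nat -> nat -> C) n1 n2 :
  csum (fun i => csum (f i) n2) n1 = csum (fun j => csum (fun i => f i j) n1) n2.
Proof. induction n1 as [|n1 IH]; simpl; [|rewrite IH, <- csum_plus]; reflexivity. Qed.

Lemma csum_shift (f : nat -> C) n :
  csum f (S n) = (f O + csum (fun j => f (S j)) n)%C.
Proof. induction n as [|n IH]; simpl in *; [|rewrite IH]; ring. Qed.

Lemma csum_RtoC (g : nat -> R) n : csum (fun j => RtoC (g j)) n = RtoC (sum_f_R0 g n).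
Proof. induction n as [|n IH]; simpl; [|rewrite IH, RtoC_plus]; reflexivity. Qed.

Lemma Cmod_csum_le (f : nat -> C) n :
  Cmod (csum f n) <= sum_f_R0 (fun j => Cmod (f j)) n.
Proof.
  induction n as [|n IH]; simpl; [lra|].
  eapply Rle_trans; [apply Cmod_triangle | lra].
Qed.

Lemma sum_f_R0_ge_term (f : nat -> R) j N :
  (forall i, 0 <= f i) -> (j <= N)%nat -> f j <= sum_f_R0 f N.
Proof.
  intros H Hj. induction N as [|N IH].
  - replace j with O by lia. simpl. lra.
  - simpl. destruct (Nat.eq_dec j (S N)) as [->|Hne].
    + pose proof (cond_pos_sum f N H). lra.
    + pose proof (H (S N)). specialize (IH ltac:(lia)). lra.
Qed.

Lemma csum_single (f : nat -> C) n l :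
  (forall j, (j <= n)%nat -> j <> l -> f j = 0) ->
  csum f n = if Nat.leb l n then f l else 0.
Proof.
  induction n as [|n IH]; intros H; simpl.
  - destruct l; [reflexivity|]. apply H; lia.
  - rewrite IH by (intros; apply H; lia).
    destruct (Nat.leb_spec l n), (Nat.leb_spec l (S n)); try lia.
    + rewrite (H (S n)) by lia. ring.
    + replace l with (S n) by lia. ring.
    + rewrite (H (S n)) by lia. ring.
Qed.

Lemma csum_trunc (f : nat -> C) l n : (l <= n)%nat ->
  (forall k, (l < k)%nat -> f k = 0) -> csum f n = csum f l.
Proof.
  intros Hln H. induction n as [|n IH].
  - replace l with O by lia. reflexivity.
  - destruct (Nat.eq_dec l (S n)) as [->|Hne]; [reflexivity|].
    simpl. rewrite IH, H by lia. ring.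
Qed.

Fixpoint binom (n k : nat) : nat :=
  match n, k with
  | _, O => 1
  | O, S _ => 0
  | S n', S k' => binom n' k' + binom n' (S k')
  end.

Lemma binom_0_r n : binom n 0 = 1%nat.
Proof. destruct n; reflexivity. Qed.

Lemma binom_gt n k : (n < k)%nat -> binom n k = 0%nat.
Proof.
  revert k; induction n as [|n IH]; intros [|k] H; simpl; try lia; try reflexivity.
  rewrite !IH by lia. reflexivity.
Qed.

Lemma binom_diag n : binom n n = 1%nat.
Proof. induction n as [|n IH]; simpl; [|rewrite IH, binom_gt]; lia. Qed.

Lemma binom_succ_diag n : binom (S n) n = S n.
Proof.
  induction n as [|n IH]; [reflexivity|].
  change (binom (S (S n)) (S n)) with (binom (S n) n + binom (S n) (S n))%nat.
  rewrite IH, binom_diag. lia.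
Qed.

Lemma binom_1_r n : binom n 1 = n.
Proof. induction n as [|n IH]; simpl; [|rewrite IH, binom_0_r]; lia. Qed.

Lemma binom_absorb m l : (binom (S m) (S l) * S l = S m * binom m l)%nat.
Proof.
  revert l; induction m as [|m IH]; intros [|l].
  - reflexivity.
  - simpl. lia.
  - rewrite binom_1_r, binom_0_r. lia.
  - change (binom (S (S m)) (S (S l))) with (binom (S m) (S l) + binom (S m) (S (S l)))%nat.
    assert (Hpascal : binom (S m) (S l) = (binom m l + binom m (S l))%nat) by reflexivity.
    pose proof (IH l). pose proof (IH (S l)). nia.
Qed.

Definition ffact (m l : nat) : nat := (binom m l * fact l)%nat.

Lemma ffact_succ m l : ffact (S m) (S l) = (S m * ffact m l)%nat.
Proof. unfold ffact. rewrite fact_simpl. pose proof (binom_absorb m l). nia. Qed.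

Definition deriv_pow (l m : nat) (alpha : C) : C := (INR (ffact m l) * alpha ^ (m - l))%C.

Lemma Cbinomial (a b : C) m : ((a + b) ^ m)%C =
  csum (fun j => INR (binom m j) * (a ^ (m - j) * b ^ j))%C m.
Proof.
  induction m as [|m IH]; [simpl; ring|].
  set (s := csum (fun j => INR (binom m j) * (a ^ (m - j) * b ^ j))%C m) in IH.
  set (h := fun j => (INR (binom m j) * (a ^ (S m - j) * b ^ j))%C).
  assert (Ha : (a * s)%C = csum h (S m)).
  { unfold s. rewrite <- csum_scal. cbn [csum]. unfold h at 2.
    rewrite (binom_gt m (S m)) by lia. rewrite Cplus_comm, Cmult_0_l, Cplus_0_l.
    apply csum_ext. intros j Hj. unfold h.
    replace (S m - j)%nat with (S (m - j)) by lia. rewrite Cpow_S. ring. }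
  assert (Hb : csum (fun j => INR (binom m j) * (a ^ (m - j) * b ^ S j))%C m = (b * s)%C).
  { unfold s. rewrite <- csum_scal. apply csum_ext. intros j _. rewrite Cpow_S. ring. }
  rewrite csum_shift, Cpow_S, IH.
  rewrite (csum_ext _ (fun j => INR (binom m j) * (a ^ (m - j) * b ^ S j)
                             + INR (binom m (S j)) * (a ^ (m - j) * b ^ S j))%C)
    by (intros j _; simpl binom; rewrite plus_INR, RtoC_plus; simpl; ring).
  rewrite csum_plus, Hb.
  assert (Hs : (a * s)%C = (INR (binom (S m) 0) * (a ^ (S m - 0) * b ^ 0)
                  + csum (fun j => INR (binom m (S j)) * (a ^ (m - j) * b ^ S j)) m)%C).
  { rewrite Ha, csum_shift. unfold h. rewrite !binom_0_r. reflexivity. }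
  transitivity (a * s + b * s)%C; [ring | rewrite Hs; ring].
Qed.

Lemma Rbinomial (x y : R) m :
  (x + y) ^ m = sum_f_R0 (fun j => INR (binom m j) * (x ^ (m - j) * y ^ j)) m.
Proof.
  apply RtoC_inj. rewrite <- csum_RtoC, RtoC_pow, RtoC_plus, Cbinomial.
  apply csum_ext. intros j _. rewrite !RtoC_mult, !RtoC_pow. reflexivity.
Qed.

(** * Forward differences *)

(* [fdiff_coef l k = (-1)^(l-k) C(l,k)] is the weight of [f (x + k)] in the
   [l]-th forward difference of [f] at [x]. *)
Fixpoint fdiff_coef (l k : nat) : R :=
  match l with
  | O => if Nat.eqb k 0 then 1 else 0
  | S l' => match k with O => 0 | S k' => fdiff_coef l' k' end - fdiff_coef l' k
  end.

Lemma fdiff_coef_gt l k : (l < k)%nat -> fdiff_coef l k = 0.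
Proof.
  revert k; induction l as [|l IH]; intros k H; simpl.
  - destruct (Nat.eqb_spec k 0); [lia | reflexivity].
  - destruct k as [|k]; [lia|]. rewrite !IH by lia. ring.
Qed.

Lemma fdiff_coef_bound l k : Rabs (fdiff_coef l k) <= 2 ^ l.
Proof.
  revert k; induction l as [|l IH]; intros k; simpl.
  - destruct (Nat.eqb k 0); rewrite ?Rabs_R1, ?Rabs_R0; lra.
  - eapply Rle_trans; [apply Rabs_triang|]. rewrite Rabs_Ropp.
    pose proof (IH k). destruct k as [|k].
    + rewrite Rabs_R0. pose proof (pow_le 2 l ltac:(lra)). lra.
    + pose proof (IH k). lra.
Qed.

Definition fdiff_mono (j l : nat) : C := csum (fun k => fdiff_coef l k * INR k ^ j)%C l.

(* [Delta^(l+1) x^j = Delta^l ((x + 1)^j - x^j)], with [(x + 1)^j] expanded binomially. *)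
Lemma fdiff_mono_succ j l : fdiff_mono j (S l) =
  (csum (fun i => INR (binom j i) * fdiff_mono i l) j - fdiff_mono j l)%C.
Proof.
  unfold fdiff_mono.
  rewrite (csum_ext _ (fun k => RtoC (match k with O => 0 | S k' => fdiff_coef l k' end) * INR k ^ j
                                - fdiff_coef l k * INR k ^ j)%C)
    by (intros k _; simpl fdiff_coef; rewrite RtoC_minus; ring).
  rewrite csum_minus, csum_shift. cbn [csum]. rewrite fdiff_coef_gt by lia.
  rewrite (csum_ext _
             (fun k => csum (fun i => INR (binom j i) * (fdiff_coef l k * INR k ^ i)) j)%C).
  2:{ intros k _. rewrite S_INR, RtoC_plus, Cplus_comm, Cbinomial, <- csum_scal.
      apply csum_ext. intros i _. rewrite Cpow_1_l. ring. }
  rewrite csum_swap.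
  rewrite (csum_ext (fun i => csum _ l)
             (fun i => INR (binom j i) * csum (fun k => fdiff_coef l k * INR k ^ i) l)%C)
    by (intros i _; apply csum_scal).
  simpl. ring.
Qed.

Lemma fdiff_mono_triangular l :
  (forall j, (j < l)%nat -> fdiff_mono j l = 0) /\ fdiff_mono l l = INR (fact l).
Proof.
  induction l as [|l [Hlt Hdiag]].
  - split; [intros; lia|]. unfold fdiff_mono. simpl. ring.
  - assert (Hlow : forall (c : nat -> C) N, (N <= l)%nat ->
              csum (fun i => c i * fdiff_mono i l)%C N = (c N * fdiff_mono N l)%C).
    { intros c N HN. rewrite (csum_single _ _ N), Nat.leb_refl; [reflexivity|].
      intros i Hi HiN. rewrite Hlt by lia. ring. }
    split.
    + intros j Hj. rewrite fdiff_mono_succ, Hlow, binom_diag by lia.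
      destruct (Nat.eq_dec j l) as [->|Hne]; [|rewrite Hlt by lia]; simpl; ring.
    + rewrite fdiff_mono_succ. cbn [csum]. rewrite Hlow, binom_diag, binom_succ_diag, Hdiag by lia.
      rewrite fact_simpl, mult_INR, RtoC_mult. simpl INR. ring.
Qed.

Lemma fdiff_mono_bound j l : Cmod (fdiff_mono j l) <= INR (S l) * 2 ^ l * INR l ^ j.
Proof.
  unfold fdiff_mono. eapply Rle_trans; [apply Cmod_csum_le|].
  eapply Rle_trans; [apply (sum_Rle _ (fun _ => 2 ^ l * INR l ^ j))|].
  - intros k Hk. rewrite Cmod_mult, Cmod_R, Cmod_pow, Cmod_R, (Rabs_pos_eq (INR k)) by apply pos_INR.
    apply Rmult_le_compat; [apply Rabs_pos | apply pow_le, pos_INR | apply fdiff_coef_bound |].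
    apply pow_incr. split; [apply pos_INR | apply le_INR; lia].
  - rewrite sum_cte. lra.
Qed.

Definition fdiff_pow (alpha : C) (eps : R) (l m : nat) : C :=
  csum (fun k => fdiff_coef l k * (alpha + INR k * eps) ^ m)%C l.

Lemma fdiff_pow_expand alpha eps l m : fdiff_pow alpha eps l m =
  csum (fun j => INR (binom m j) * alpha ^ (m - j) * eps ^ j * fdiff_mono j l)%C m.
Proof.
  unfold fdiff_pow, fdiff_mono.
  rewrite (csum_ext _ (fun k => csum (fun j => INR (binom m j) * alpha ^ (m - j) * eps ^ j
                                             * (fdiff_coef l k * INR k ^ j)) m)%C).
  2:{ intros k _. rewrite Cbinomial, <- csum_scal. apply csum_ext. intros j _.
      rewrite Cpow_mult_l. ring. }
  rewrite csum_swap. apply csum_ext. intros j _. apply csum_scal.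
Qed.

Lemma Rle_pow_le1 (x : R) i j : 0 <= x <= 1 -> (i <= j)%nat -> x ^ j <= x ^ i.
Proof.
  intros Hx Hij. replace j with (i + (j - i))%nat by lia. rewrite pow_add.
  assert (x ^ (j - i) <= 1) by (rewrite <- (pow1 (j - i)); apply pow_incr; lra).
  pose proof (pow_le x i ltac:(lra)). nra.
Qed.

(* The [j]-th binomial term of [(alpha + k eps)^m] survives the [l]-th difference
   only for [j >= l]; the term [j = l] is exactly [eps^l (m)_l alpha^(m-l)]. *)
Lemma fdiff_pow_approx alpha eps l m : 0 <= eps <= 1 ->
  Cmod (fdiff_pow alpha eps l m - eps ^ l * deriv_pow l m alpha)%C
  <= eps ^ S l * (INR (S l) * 2 ^ l) * (Cmod alpha + INR l) ^ m.
Proof.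
  intros Heps.
  destruct (fdiff_mono_triangular l) as [Hlt Hdiag].
  assert (Htarget : (eps ^ l * deriv_pow l m alpha)%C =
    csum (fun j => if Nat.eqb j l then eps ^ l * deriv_pow l m alpha else 0)%C m).
  { rewrite (csum_single _ _ l), Nat.eqb_refl.
    - destruct (Nat.leb_spec l m); [reflexivity|].
      unfold deriv_pow, ffact. rewrite binom_gt by lia. simpl. ring.
    - intros j _ Hj. apply Nat.eqb_neq in Hj. rewrite Hj. reflexivity. }
  rewrite Htarget, fdiff_pow_expand, <- csum_minus.
  eapply Rle_trans; [apply Cmod_csum_le|].
  rewrite Rbinomial, scal_sum. apply sum_Rle. intros j Hj.
  destruct (Nat.lt_total j l) as [Hjl | [-> | Hjl]].
  - rewrite Hlt by lia. replace (Nat.eqb j l) with false by (symmetry; apply Nat.eqb_neq; lia).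
    match goal with |- Cmod ?z <= _ => replace z with (RtoC 0) by ring end.
    rewrite Cmod_0. nonneg.
  - rewrite Nat.eqb_refl, Hdiag. unfold deriv_pow, ffact. rewrite mult_INR, RtoC_mult.
    match goal with |- Cmod ?z <= _ => replace z with (RtoC 0) by ring end.
    rewrite Cmod_0. nonneg.
  - replace (Nat.eqb j l) with false by (symmetry; apply Nat.eqb_neq; lia).
    match goal with |- Cmod ?z <= _ => replace z with (INR (binom m j) * alpha ^ (m - j)
                                                       * (eps ^ j * fdiff_mono j l))%C by ring end.
    rewrite !Cmod_mult, <- RtoC_pow, !Cmod_R, Cmod_pow, !Rabs_pos_eq by nonneg.
    pose proof (fdiff_mono_bound j l).
    pose proof (Rle_pow_le1 eps (S l) j Heps Hjl).
    assert (0 <= INR (binom m j) * Cmod alpha ^ (m - j)) by nonneg.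
    assert (0 <= eps ^ j) by nonneg.
    assert (0 <= Cmod (fdiff_mono j l)) by nonneg.
    replace (INR (binom m j) * (Cmod alpha ^ (m - j) * INR l ^ j) * (eps ^ S l * (INR (S l) * 2 ^ l)))
      with (INR (binom m j) * Cmod alpha ^ (m - j) * (eps ^ S l * (INR (S l) * 2 ^ l * INR l ^ j)))
      by ring.
    apply Rmult_le_compat_l; [assumption|].
    apply Rmult_le_compat; assumption.
Qed.

(** * Series, l^2 distance and fidelity *)

Lemma is_series_exp (x : R) : is_series (fun m => x ^ m / INR (fact m)) (exp x).
Proof.
  eapply is_series_ext; [|apply (is_exp_Reals x)].
  intros m. rewrite pow_n_pow. reflexivity.
Qed.

Lemma Series_le_exp (f : nat -> R) (c x : R) :
  (forall m, 0 <= f m <= c * (x ^ m / INR (fact m))) -> ex_series f /\ Series f <= c * exp x.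
Proof.
  intros H.
  assert (Hexp : ex_series (fun m => c * (x ^ m / INR (fact m))))
    by (apply (ex_series_scal_l c (fun m => x ^ m / INR (fact m))); eexists; apply is_series_exp).
  split.
  - refine (ex_series_le f _ _ Hexp).
    intros m. apply Rabs_le. pose proof (H m). lra.
  - rewrite <- (is_series_unique _ _ (is_series_exp x)), <- Series_scal_l.
    apply Series_le; assumption.
Qed.

Lemma l2_of_exp_growth (E K x : R) (q : nat -> C) :
  (forall m, Cmod (q m) <= K * x ^ m) ->
  ex_series (fun m => Cmod (RtoC (E / sqrt (INR (fact m))) * q m) ^ 2) /\
  Series (fun m => Cmod (RtoC (E / sqrt (INR (fact m))) * q m) ^ 2) <= E ^ 2 * K ^ 2 * exp (x ^ 2).
Proof.
  intros Hq. apply Series_le_exp. intros m. split; [apply pow2_ge_0|].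
  rewrite Cmod_mult, Cmod_R, Rpow_mult_distr, pow2_abs.
  assert (HE : (E / sqrt (INR (fact m))) ^ 2 = E ^ 2 / INR (fact m)).
  { unfold Rdiv. rewrite Rpow_mult_distr, pow_inv, pow2_sqrt by apply pos_INR. reflexivity. }
  assert (Hq2 : Cmod (q m) ^ 2 <= K ^ 2 * (x ^ 2) ^ m).
  { rewrite <- pow_mult, Nat.mul_comm, pow_mult, <- Rpow_mult_distr.
    apply pow_incr. split; [apply Cmod_ge_0 | apply Hq]. }
  assert (0 < INR (fact m)) by apply lt_0_INR, lt_O_fact.
  rewrite HE. unfold Rdiv.
  replace (E ^ 2 * K ^ 2 * ((x ^ 2) ^ m * / INR (fact m)))
    with (E ^ 2 * / INR (fact m) * (K ^ 2 * (x ^ 2) ^ m)) by ring.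
  apply Rmult_le_compat_l; [|exact Hq2].
  apply Rmult_le_pos; [apply pow2_ge_0 | left; apply Rinv_0_lt_compat; assumption].
Qed.

Lemma is_series_0 : is_series (fun _ : nat => 0) 0.
Proof.
  eapply filterlim_ext; [|apply filterlim_const].
  intros n. rewrite sum_n_const. simpl. ring.
Qed.

Lemma Series_0 : Series (fun _ => 0) = 0.
Proof. apply is_series_unique, is_series_0. Qed.

Lemma Series_le_of_ex (a b : nat -> R) :
  ex_series a -> ex_series b -> (forall n, a n <= b n) -> Series a <= Series b.
Proof.
  intros Ha Hb H.
  assert (Hdiff : 0 <= Series (fun n => b n - a n)).
  { rewrite <- Series_0. apply Series_le.
    - intros n. specialize (H n). lra.
    - exact (ex_series_minus b a Hb Ha). }
  rewrite Series_minus in Hdiff by assumption. lra.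
Qed.

Lemma Series_single (c : R) (k : nat) : Series (fun m => if Nat.eqb m k then c else 0) = c.
Proof.
  rewrite (Series_incr_n_aux _ k)
    by (intros j Hj; destruct (Nat.eqb_spec j k); [lia | reflexivity]).
  apply is_series_unique, is_series_decr_1.
  rewrite Nat.add_0_r, Nat.eqb_refl.
  match goal with
  | |- is_series _ ?l => replace l with 0 by (symmetry; exact (@plus_opp_r R_AbelianGroup c))
  end.
  eapply is_series_ext; [|apply is_series_0].
  intros n. simpl. destruct (Nat.eqb_spec (k + S n) k); [lia | reflexivity].
Qed.

Lemma Series_pos_of_term (a : nat -> R) (n0 : nat) :
  ex_series a -> (forall m, 0 <= a m) -> 0 < a n0 -> 0 < Series a.
Proof.
  intros Ha Hpos Hn0. eapply Rlt_le_trans; [exact Hn0|].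
  rewrite <- (Series_single (a n0) n0). apply Series_le; [|exact Ha].
  intros m. destruct (Nat.eqb_spec m n0) as [->|]; split; auto; lra.
Qed.

Lemma ex_series_lincomb (f g : nat -> R) (c1 c2 : R) : ex_series f -> ex_series g ->
  ex_series (fun m => c1 * f m + c2 * g m).
Proof.
  intros Hf Hg. apply (ex_series_plus (fun m => c1 * f m) (fun m => c2 * g m)).
  - apply (ex_series_scal_l c1 f Hf).
  - apply (ex_series_scal_l c2 g Hg).
Qed.

Lemma Series_lincomb (f g : nat -> R) (c1 c2 : R) : ex_series f -> ex_series g ->
  Series (fun m => c1 * f m + c2 * g m) = c1 * Series f + c2 * Series g.
Proof.
  intros Hf Hg. rewrite Series_plus, !Series_scal_l; [reflexivity| |].
  - apply (ex_series_scal_l c1 f Hf).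
  - apply (ex_series_scal_l c2 g Hg).
Qed.

Lemma Cmod2_Re_Im (z : C) : Cmod z ^ 2 = Re z ^ 2 + Im z ^ 2.
Proof. unfold Cmod. rewrite pow2_sqrt; [reflexivity | nra]. Qed.

Lemma im_le_Cmod (c : C) : Rabs (Im c) <= Cmod c.
Proof.
  unfold Cmod. rewrite <- sqrt_Rsqr_abs. apply sqrt_le_1_alt. unfold Rsqr, Im. nra.
Qed.

Lemma conj_mult_Re_Im_le (z w : C) :
  Rabs (Re (Cconj z * w)) <= (Cmod z ^ 2 + Cmod w ^ 2) / 2 /\
  Rabs (Im (Cconj z * w)) <= (Cmod z ^ 2 + Cmod w ^ 2) / 2.
Proof.
  assert (H : Cmod (Cconj z * w) <= (Cmod z ^ 2 + Cmod w ^ 2) / 2).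
  { rewrite Cmod_mult, Cmod_conj. pose proof (pow2_ge_0 (Cmod z - Cmod w)). nra. }
  split; eapply Rle_trans; [apply re_le_Cmod | exact H | apply im_le_Cmod | exact H].
Qed.

(* Both bounds are [|sqrt t z -+ (w - z) / sqrt t|^2 >= 0] in disguise. *)
Lemma Cmod2_le_split (z w : C) (t : R) : 0 < t ->
  Cmod w ^ 2 <= (1 + t) * Cmod z ^ 2 + (1 + / t) * Cmod (w - z) ^ 2.
Proof.
  intros Ht. rewrite !Cmod2_Re_Im. destruct z as [x y], w as [u v]. simpl.
  assert (Hsq : 0 <= ((t * x - (u - x)) ^ 2 + (t * y - (v - y)) ^ 2) / t)
    by (apply Rdiv_le_0_compat; [apply Rplus_le_le_0_compat; apply pow2_ge_0 | lra]).
  replace (((t * x - (u - x)) ^ 2 + (t * y - (v - y)) ^ 2) / t)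
    with ((1 + t) * (x ^ 2 + y ^ 2) + (1 + / t) * ((u + - x) ^ 2 + (v + - y) ^ 2) - (u ^ 2 + v ^ 2))
    in Hsq by (field; lra).
  lra.
Qed.

Lemma Re_conj_mult_ge (z w : C) (t : R) : 0 < t ->
  (1 - t / 2) * Cmod z ^ 2 - / (2 * t) * Cmod (w - z) ^ 2 <= Re (Cconj z * w).
Proof.
  intros Ht. rewrite !Cmod2_Re_Im. destruct z as [x y], w as [u v]. simpl.
  assert (Hsq : 0 <= ((t * x + (u - x)) ^ 2 + (t * y + (v - y)) ^ 2) / (2 * t))
    by (apply Rdiv_le_0_compat; [apply Rplus_le_le_0_compat; apply pow2_ge_0 | lra]).
  replace (((t * x + (u - x)) ^ 2 + (t * y + (v - y)) ^ 2) / (2 * t))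
    with (x * u - - y * v
          - ((1 - t / 2) * (x ^ 2 + y ^ 2) - / (2 * t) * ((u + - x) ^ 2 + (v + - y) ^ 2)))
    in Hsq by (field; lra).
  lra.
Qed.

Lemma inner_norm2_of_close (psi phi : state) (t : R) : 0 < t ->
  ex_series (fun m => Cmod (psi m) ^ 2) ->
  ex_series (fun m => Cmod (phi m - psi m) ^ 2) ->
  Series (fun m => Cmod (phi m - psi m) ^ 2) <= t ^ 2 * norm2 psi ->
  (1 - t) * norm2 psi <= Re (inner psi phi) /\
  Re (inner psi phi) <= (norm2 psi + norm2 phi) / 2 /\
  norm2 phi <= (1 + t) ^ 2 * norm2 psi.
Proof.
  intros Ht Ha He HD.
  set (a := fun m => Cmod (psi m) ^ 2) in *.
  set (e := fun m => Cmod (phi m - psi m) ^ 2) in *.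
  set (p := fun m => Cmod (phi m) ^ 2).
  set (r := fun m => Re (Cconj (psi m) * phi m)).
  change (Re (inner psi phi)) with (Series r).
  change (norm2 psi) with (Series a) in *. change (norm2 phi) with (Series p).
  assert (Hp : ex_series p).
  { refine (ex_series_le p _ _ (ex_series_lincomb a e 2 2 Ha He)).
    intros m. rewrite Rabs_pos_eq by apply pow2_ge_0.
    pose proof (Cmod2_le_split (psi m) (phi m) 1 ltac:(lra)) as Hsplit.
    unfold p, a, e. rewrite Rinv_1 in Hsplit. lra. }
  assert (Hr_abs : forall m, Rabs (r m) <= / 2 * a m + / 2 * p m).
  { intros m. pose proof (conj_mult_Re_Im_le (psi m) (phi m)). unfold r, a, p. lra. }
  assert (Hr : ex_series r) by exact (ex_series_le r _ Hr_abs (ex_series_lincomb a p _ _ Ha Hp)).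
  assert (Hr_low : (1 - t / 2) * Series a + - / (2 * t) * Series e <= Series r).
  { rewrite <- Series_lincomb by assumption.
    apply Series_le_of_ex; [apply ex_series_lincomb; assumption | exact Hr |].
    intros m. pose proof (Re_conj_mult_ge (psi m) (phi m) t Ht). unfold r, a, e. lra. }
  assert (Hr_up : Series r <= / 2 * Series a + / 2 * Series p).
  { rewrite <- Series_lincomb by assumption.
    apply Series_le_of_ex; [exact Hr | apply ex_series_lincomb; assumption |].
    intros m. pose proof (Rle_abs (r m)). pose proof (Hr_abs m). lra. }
  assert (Hp_up : Series p <= (1 + t) * Series a + (1 + / t) * Series e).
  { rewrite <- Series_lincomb by assumption.
    apply Series_le_of_ex; [exact Hp | apply ex_series_lincomb; assumption |].
    intros m. apply Cmod2_le_split, Ht. }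
  assert (He_t : / t * Series e <= t * Series a).
  { replace (t * Series a) with (/ t * (t ^ 2 * Series a)) by (field; lra).
    apply Rmult_le_compat_l; [left; apply Rinv_0_lt_compat, Ht | exact HD]. }
  replace (/ (2 * t)) with (/ 2 * / t) in Hr_low by (field; lra).
  split; [|split]; nra.
Qed.

(* By [inner_norm2_of_close] the fidelity is at least [((1 - t) / (1 + t))^2 >= 1 - 4 t]. *)
Lemma fidelity_ge_of_close (psi phi : state) (t : R) : 0 < t <= 1 / 4 ->
  ex_series (fun m => Cmod (psi m) ^ 2) -> 0 < norm2 psi ->
  ex_series (fun m => Cmod (phi m - psi m) ^ 2) ->
  Series (fun m => Cmod (phi m - psi m) ^ 2) <= t ^ 2 * norm2 psi ->
  Defs.nonzero phi /\ 1 - 4 * t <= fidelity psi phi.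
Proof.
  intros Ht Ha Hpos He HD.
  destruct (inner_norm2_of_close psi phi t ltac:(lra) Ha He HD) as (Hr_ge & Hr_up & Hp_le).
  assert (Hp_pos : 0 < norm2 phi) by nra.
  split.
  - apply NNPP. intros Hzero.
    assert (Hr0 : Re (inner psi phi) = 0).
    { change (Re (inner psi phi)) with (Series (fun m => Re (Cconj (psi m) * phi m))).
      rewrite <- Series_0. apply Series_ext. intros m.
      destruct (classic (phi m = 0)) as [->|Hm].
      - rewrite Cmult_0_r. reflexivity.
      - exfalso. apply Hzero. exists m. exact Hm. }
    nra.
  - unfold fidelity. rewrite Cmod2_Re_Im.
    apply Rle_div_r; [apply Rmult_lt_0_compat; assumption |].
    assert (((1 - t) * norm2 psi) ^ 2 <= Re (inner psi phi) ^ 2) by (apply pow_incr; nra).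
    assert (0 <= Im (inner psi phi) ^ 2) by apply pow2_ge_0.
    assert ((1 - 4 * t) * (norm2 psi * norm2 phi)
            <= (1 - 4 * t) * (norm2 psi * ((1 + t) ^ 2 * norm2 psi))).
    { apply Rmult_le_compat_l; [lra|]. apply Rmult_le_compat_l; lra. }
    assert (0 <= t * (2 + 7 * t + 4 * t ^ 2) * norm2 psi ^ 2) by nonneg.
    nra.
Qed.

Lemma approximable_of_l2_approx (psi : state) (k : nat) :
  ex_series (fun m => Cmod (psi m) ^ 2) ->
  (forall eta, 0 < eta -> exists L : list (C * C), (length L <= k)%nat /\
      ex_series (fun m => Cmod (superpos L m - psi m) ^ 2) /\
      Series (fun m => Cmod (superpos L m - psi m) ^ 2) <= eta) ->
  approximable psi k.
Proof.
  intros Hpsi Happrox.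
  destruct (classic (forall n, psi n = 0)) as [Hzero | Hnz]; [left; exact Hzero | right].
  apply not_all_ex_not in Hnz. destruct Hnz as [n0 Hn0].
  assert (Hnorm : 0 < norm2 psi).
  { apply (Series_pos_of_term _ n0 Hpsi); [intros; apply pow2_ge_0 | apply pow_lt, Cmod_gt_0, Hn0]. }
  intros delta Hdelta.
  set (t := Rmin (delta / 8) (1 / 4)).
  assert (Ht : 0 < t <= 1 / 4) by (unfold t; split; [apply Rmin_glb_lt; lra | apply Rmin_r]).
  assert (Ht_delta : t <= delta / 8) by apply Rmin_l.
  destruct (Happrox (t ^ 2 * norm2 psi)) as (L & Hlen & Hex & Hclose).
  { apply Rmult_lt_0_compat; [apply pow_lt; lra | exact Hnorm]. }
  destruct (fidelity_ge_of_close psi (superpos L) t Ht Hpsi Hnorm Hex Hclose) as [Hnz Hfid].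
  exists (superpos L). split; [split; [exact Hnz | exists L; split; [exact Hlen | reflexivity]] | lra].
Qed.

Definition coh_scale (alpha : C) : R := exp (- (Cmod alpha ^ 2) / 2).

Lemma sqrt_fact_pos m : 0 < sqrt (INR (fact m)).
Proof. apply sqrt_lt_R0, lt_0_INR, lt_O_fact. Qed.

Lemma adag_pow_coh alpha l m : adag_pow l (coh alpha) m =
  (RtoC (coh_scale alpha / sqrt (INR (fact m))) * deriv_pow l m alpha)%C.
Proof.
  unfold deriv_pow. revert m; induction l as [|l IH]; intros m.
  - unfold ffact. rewrite binom_0_r, Nat.sub_0_r. unfold coh, coh_scale. simpl. ring.
  - unfold adag_pow. simpl Nat.iter. destruct m as [|m].
    + unfold ffact. rewrite binom_gt by lia. simpl. ring.
    + unfold adag at 1. fold (adag_pow l (coh alpha) m). rewrite IH, ffact_succ, mult_INR, RtoC_mult.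
      assert (Hr : sqrt (INR (S m)) * (coh_scale alpha / sqrt (INR (fact m)))
                   = coh_scale alpha / sqrt (INR (fact (S m))) * INR (S m)).
      { pose proof (sqrt_fact_pos m).
        assert (0 < sqrt (INR (S m))) by (apply sqrt_lt_R0, lt_0_INR; lia).
        rewrite fact_simpl, mult_INR, sqrt_mult by apply pos_INR.
        rewrite <- (sqrt_sqrt (INR (S m))) at 3 by apply pos_INR. field. lra. }
      rewrite Cmult_assoc, Cmult_assoc, <- RtoC_mult, Hr, RtoC_mult. simpl Nat.sub. ring.
Qed.

Definition deriv_comb (b : nat -> C) (n : nat) (alpha : C) (m : nat) : C :=
  csum (fun l => b l * deriv_pow l m alpha)%C n.

Lemma poly_adag_coh alpha b n m : poly_adag b n (coh alpha) m =
  (RtoC (coh_scale alpha / sqrt (INR (fact m))) * deriv_comb b n alpha m)%C.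
Proof.
  unfold poly_adag, deriv_comb. rewrite <- csum_scal. apply csum_ext. intros l _.
  rewrite adag_pow_coh. ring.
Qed.

Lemma deriv_comb_bound b n alpha m : Cmod (deriv_comb b n alpha m) <=
  sum_f_R0 (fun l => Cmod (b l) * INR (fact l)) n * (Cmod alpha + 1) ^ m.
Proof.
  unfold deriv_comb, deriv_pow. eapply Rle_trans; [apply Cmod_csum_le|].
  rewrite (Rmult_comm (sum_f_R0 _ n)), scal_sum. apply sum_Rle. intros l _.
  rewrite !Cmod_mult, Cmod_R, Cmod_pow, Rabs_pos_eq by apply pos_INR.
  unfold ffact. rewrite mult_INR.
  assert (Hbin : INR (binom m l) * Cmod alpha ^ (m - l) <= (Cmod alpha + 1) ^ m).
  { destruct (Nat.leb_spec l m).
    - rewrite Rbinomial.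
      eapply Rle_trans; [|apply (sum_f_R0_ge_term _ l); [intro; nonneg | assumption]].
      cbv beta. rewrite pow1. lra.
    - rewrite binom_gt by lia. simpl INR. rewrite Rmult_0_l. nonneg. }
  assert (0 <= Cmod (b l) * INR (fact l)) by nonneg.
  replace (Cmod (b l) * (INR (binom m l) * INR (fact l) * Cmod alpha ^ (m - l)))
    with ((Cmod (b l) * INR (fact l)) * (INR (binom m l) * Cmod alpha ^ (m - l))) by ring.
  apply Rmult_le_compat_l; assumption.
Qed.

Lemma poly_adag_coh_l2 alpha b n : ex_series (fun m => Cmod (poly_adag b n (coh alpha) m) ^ 2).
Proof.
  apply (ex_series_ext (fun m =>
           Cmod (RtoC (coh_scale alpha / sqrt (INR (fact m))) * deriv_comb b n alpha m) ^ 2)).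
  - intros m. rewrite poly_adag_coh. reflexivity.
  - exact (proj1 (l2_of_exp_growth _ _ _ _ (deriv_comb_bound b n alpha))).
Qed.

Lemma superpos_map_seq (F : nat -> C * C) a n m :
  superpos (map F (seq a (S n))) m =
  csum (fun k => fst (F (a + k)%nat) * coh (snd (F (a + k)%nat)) m)%C n.
Proof.
  revert a; induction n as [|n IH]; intros a.
  - unfold superpos. simpl. rewrite Nat.add_0_r. ring.
  - transitivity (fst (F a) * coh (snd (F a)) m + superpos (map F (seq (S a) (S n))) m)%C;
      [reflexivity|].
    rewrite IH, csum_shift, Nat.add_0_r. f_equal.
    apply csum_ext. intros j _. rewrite Nat.add_succ_comm. reflexivity.
Qed.

(** * Approximation by finite differences *)

(* Chosen so that [sum_k fdiff_weight b n eps k * f (alpha + k eps)] is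
   [sum_l b_l (Delta_eps^l f)(alpha) / eps^l]. *)
Definition fdiff_weight (b : nat -> C) (n : nat) (eps : R) (k : nat) : C :=
  csum (fun l => b l * RtoC (fdiff_coef l k / eps ^ l))%C n.

Lemma fdiff_comb_approx alpha b n eps m : 0 < eps <= 1 ->
  Cmod (csum (fun k => fdiff_weight b n eps k * (alpha + INR k * eps) ^ m) n
        - deriv_comb b n alpha m)%C
  <= eps * sum_f_R0 (fun l => Cmod (b l) * (INR (S l) * 2 ^ l)) n * (Cmod alpha + INR n) ^ m.
Proof.
  intros Heps.
  assert (Hsplit : csum (fun k => fdiff_weight b n eps k * (alpha + INR k * eps) ^ m)%C n
      = csum (fun l => b l * RtoC (/ eps ^ l) * fdiff_pow alpha eps l m)%C n).
  { unfold fdiff_weight, fdiff_pow.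
    rewrite (csum_ext _ (fun k => csum (fun l => b l * RtoC (/ eps ^ l)
                                     * (fdiff_coef l k * (alpha + INR k * eps) ^ m)) n)%C).
    2:{ intros k _. rewrite Cmult_comm, <- csum_scal. apply csum_ext. intros l _.
        unfold Rdiv. rewrite RtoC_mult. ring. }
    rewrite csum_swap. apply csum_ext. intros l Hl.
    rewrite csum_scal, (csum_trunc _ l n Hl); [reflexivity|].
    intros k Hk. rewrite fdiff_coef_gt by exact Hk. ring. }
  rewrite Hsplit. unfold deriv_comb. rewrite <- csum_minus.
  eapply Rle_trans; [apply Cmod_csum_le|].
  rewrite (Rmult_comm eps), Rmult_assoc, (Rmult_comm (sum_f_R0 _ n)), scal_sum.
  apply sum_Rle. intros l Hl.
  assert (Hfactor : forall F X : C, (b l * RtoC (/ eps ^ l) * F - b l * X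
                     = b l * (RtoC (/ eps ^ l) * (F - eps ^ l * X)))%C).
  { intros F X.
    transitivity (b l * RtoC (/ eps ^ l) * F - b l * (RtoC (/ eps ^ l) * eps ^ l * X))%C;
      [|ring].
    rewrite <- RtoC_pow, <- RtoC_mult, Rinv_l by (apply pow_nonzero; lra). ring. }
  rewrite Hfactor, !Cmod_mult, Cmod_R, Rabs_pos_eq
    by (left; apply Rinv_0_lt_compat, pow_lt; lra).
  pose proof (fdiff_pow_approx alpha eps l m ltac:(lra)) as Happrox.
  assert (Hgrow : (Cmod alpha + INR l) ^ m <= (Cmod alpha + INR n) ^ m)
    by (apply pow_incr; split; [nonneg | apply Rplus_le_compat_l, le_INR, Hl]).
  assert (0 <= Cmod (b l)) by nonneg.
  rewrite Rmult_assoc. apply Rmult_le_compat_l; [assumption|].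
  eapply Rle_trans;
    [apply Rmult_le_compat_l; [left; apply Rinv_0_lt_compat, pow_lt; lra | exact Happrox]|].
  replace (/ eps ^ l * (eps ^ S l * (INR (S l) * 2 ^ l) * (Cmod alpha + INR l) ^ m))
    with (INR (S l) * 2 ^ l * (eps * (Cmod alpha + INR l) ^ m))
    by (simpl; field; apply pow_nonzero; lra).
  apply Rmult_le_compat_l; [nonneg|]. apply Rmult_le_compat_l; lra.
Qed.

Definition node_superpos (E : R) (w beta : nat -> C) (n : nat) : list (C * C) :=
  map (fun k => (RtoC (E / coh_scale (beta k)) * w k, beta k)%C) (seq 0 (S n)).

Lemma superpos_nodes E w beta n m : superpos (node_superpos E w beta n) m =
  (RtoC (E / sqrt (INR (fact m))) * csum (fun k => w k * beta k ^ m) n)%C.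
Proof.
  unfold node_superpos. rewrite superpos_map_seq, <- csum_scal. apply csum_ext. intros k _.
  simpl. unfold coh. fold (coh_scale (beta k)).
  assert (0 < coh_scale (beta k)) by apply exp_pos.
  pose proof (sqrt_fact_pos m).
  replace (E / sqrt (INR (fact m)))
    with (E / coh_scale (beta k) * (coh_scale (beta k) / sqrt (INR (fact m))))
    by (field; lra).
  rewrite RtoC_mult. ring.
Qed.

Definition fdiff_approximant (alpha : C) (b : nat -> C) (n : nat) (eps : R) : list (C * C) :=
  node_superpos (coh_scale alpha) (fdiff_weight b n eps) (fun k => alpha + INR k * eps)%C n.

Lemma fdiff_approximant_error alpha b n eps : 0 < eps <= 1 ->
  let err := fun m => Cmod (superpos (fdiff_approximant alpha b n eps) m
                            - poly_adag b n (coh alpha) m) ^ 2 in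
  ex_series err /\
  Series err <= eps ^ 2 * (coh_scale alpha ^ 2
                * sum_f_R0 (fun l => Cmod (b l) * (INR (S l) * 2 ^ l)) n ^ 2
                * exp ((Cmod alpha + INR n) ^ 2)).
Proof.
  intros Heps err.
  set (q := fun m => (csum (fun k => fdiff_weight b n eps k * (alpha + INR k * eps) ^ m) n
                      - deriv_comb b n alpha m)%C).
  assert (Herr : forall m, Cmod (RtoC (coh_scale alpha / sqrt (INR (fact m))) * q m) ^ 2 = err m).
  { intros m. unfold err, fdiff_approximant. rewrite superpos_nodes, poly_adag_coh.
    unfold q. f_equal. f_equal. ring. }
  destruct (l2_of_exp_growth (coh_scale alpha) _ (Cmod alpha + INR n) q
              (fun m => fdiff_comb_approx alpha b n eps m Heps)) as [Hex Hbound].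
  split.
  - exact (ex_series_ext _ _ Herr Hex).
  - rewrite <- (Series_ext _ _ Herr). eapply Rle_trans; [exact Hbound|]. right. ring.
Qed.

Lemma small_eps_exists (C0 eta : R) : 0 <= C0 -> 0 < eta ->
  exists eps, 0 < eps <= 1 /\ eps ^ 2 * C0 <= eta.
Proof.
  intros HC0 Heta. exists (Rmin 1 (eta / (C0 + 1))).
  assert (Hpos : 0 < Rmin 1 (eta / (C0 + 1)))
    by (apply Rmin_glb_lt; [lra | apply Rdiv_lt_0_compat; lra]).
  assert (Hle1 : Rmin 1 (eta / (C0 + 1)) <= 1) by apply Rmin_l.
  assert (Heta' : Rmin 1 (eta / (C0 + 1)) * (C0 + 1) <= eta)
    by (apply Rle_div_r; [lra | apply Rmin_r]).
  split; [lra | nra].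
Qed.

Lemma poly_adag_coh_approximable alpha b n :
  approximable (poly_adag b n (coh alpha)) (n + 1).
Proof.
  apply approximable_of_l2_approx.
  - apply poly_adag_coh_l2.
  - intros eta Heta.
    destruct (small_eps_exists (coh_scale alpha ^ 2
                * sum_f_R0 (fun l => Cmod (b l) * (INR (S l) * 2 ^ l)) n ^ 2
                * exp ((Cmod alpha + INR n) ^ 2)) eta ltac:(nonneg) Heta) as (eps & Heps & Hsmall).
    destruct (fdiff_approximant_error alpha b n eps Heps) as [Hex Hbound].
    exists (fdiff_approximant alpha b n eps). split; [|split; [exact Hex | lra]].
    unfold fdiff_approximant, node_superpos. rewrite length_map, length_seq. lia.
Qed.

Lemma adag_coh_approximable alpha : approximable (adag (coh alpha)) 2.
Proof.
  replace (adag (coh alpha))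
    with (poly_adag (fun l => if Nat.eqb l 1 then 1 else 0)%C 1 (coh alpha)).
  - apply poly_adag_coh_approximable.
  - apply functional_extensionality. intros m. unfold poly_adag. simpl. ring.
Qed.

(** * The one-photon state *)

Lemma adag_coh_0 m : adag (coh 0) m = if Nat.eqb m 1 then 1%C else 0%C.
Proof.
  destruct m as [|[|m]]; [reflexivity| |].
  - unfold adag, coh. rewrite Cmod_0. simpl.
    replace (- (0 * (0 * 1)) / 2) with 0 by field. rewrite exp_0, sqrt_1.
    apply injective_projections; simpl; field.
  - unfold adag, coh. rewrite Cpow_S. simpl. ring.
Qed.

Lemma coh_Cmod2 beta m :
  Cmod (coh beta m) ^ 2 = exp (- Cmod beta ^ 2) * ((Cmod beta ^ 2) ^ m / INR (fact m)).
Proof.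
  unfold coh. rewrite Cmod_mult, Cmod_R, Cmod_pow, Rpow_mult_distr, pow2_abs.
  unfold Rdiv. rewrite Rpow_mult_distr, pow_inv, pow2_sqrt by apply pos_INR.
  assert (Hexp : exp (- Cmod beta ^ 2 * / 2) ^ 2 = exp (- Cmod beta ^ 2)).
  { transitivity (exp (- Cmod beta ^ 2 * / 2) * exp (- Cmod beta ^ 2 * / 2)); [ring|].
    rewrite <- exp_plus. f_equal. field. }
  rewrite Hexp.
  rewrite <- !pow_mult, Nat.mul_comm. ring.
Qed.

Lemma exp_neg_mul_le_half x : 0 <= x -> exp (- x) * x <= 1 / 2.
Proof.
  intros Hx. pose proof (exp_ge_taylor x 2 Hx) as Htaylor. simpl in Htaylor.
  rewrite exp_Ropp. pose proof (exp_pos x).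
  assert (2 * x <= exp x) by (unfold Rdiv in Htaylor; nra).
  apply (Rmult_le_reg_l (exp x)); [lra|].
  rewrite <- Rmult_assoc, Rinv_r by lra. lra.
Qed.

Lemma inner_adag_coh_0 (phi : state) : inner (adag (coh 0)) phi = phi 1%nat.
Proof.
  unfold inner.
  rewrite (Series_ext _ (fun m => if Nat.eqb m 1 then Re (phi 1%nat) else 0)),
    (Series_ext (fun m => Im _) (fun m => if Nat.eqb m 1 then Im (phi 1%nat) else 0)),
    !Series_single
    by (intros m; rewrite adag_coh_0; destruct (Nat.eqb_spec m 1) as [->|_];
        unfold Re, Im; simpl; ring).
  destruct (phi 1%nat). reflexivity.
Qed.

Lemma norm2_adag_coh_0 : norm2 (adag (coh 0)) = 1.
Proof.
  unfold norm2. rewrite <- (Series_single 1 1). apply Series_ext. intros m.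
  rewrite adag_coh_0. destruct (Nat.eqb m 1); [rewrite Cmod_1 | rewrite Cmod_0]; ring.
Qed.

Lemma norm2_scaled_coh (c beta : C) : norm2 (fun m => c * coh beta m)%C = Cmod c ^ 2.
Proof.
  unfold norm2. set (x := Cmod beta ^ 2).
  rewrite (Series_ext _ (fun m => Cmod c ^ 2 * exp (- x) * (x ^ m / INR (fact m))))
    by (intros m; rewrite Cmod_mult, Rpow_mult_distr, coh_Cmod2; unfold x; ring).
  rewrite Series_scal_l, (is_series_unique _ _ (is_series_exp x)), Rmult_assoc, <- exp_plus.
  replace (- x + x) with 0 by ring. rewrite exp_0. ring.
Qed.

Lemma fidelity_one_photon_coh (c beta : C) : c <> 0%C ->
  fidelity (adag (coh 0)) (fun m => c * coh beta m)%C = exp (- Cmod beta ^ 2) * Cmod beta ^ 2.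
Proof.
  intros Hc. assert (0 < Cmod c) by (apply Cmod_gt_0, Hc).
  unfold fidelity. rewrite inner_adag_coh_0, norm2_adag_coh_0, norm2_scaled_coh.
  rewrite Cmod_mult, Rpow_mult_distr, coh_Cmod2. simpl fact; simpl INR. field. lra.
Qed.

Lemma coh_rank_le_1_inv (phi : state) (k : nat) : (k <= 1)%nat -> coh_rank_le phi k ->
  exists c beta : C, c <> 0%C /\ phi = (fun m => c * coh beta m)%C.
Proof.
  intros Hk [[n Hn] (L & Hlen & ->)].
  destruct L as [|[c beta] [|? ?]]; simpl in Hlen; try lia.
  - exfalso. apply Hn. reflexivity.
  - exists c, beta. split.
    + intros Hc0. apply Hn. unfold superpos. rewrite Hc0. simpl. ring.
    + apply functional_extensionality. intros m. unfold superpos. simpl. ring.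
Qed.

Lemma adag_coh_0_not_approximable j : (j < 2)%nat -> ~ approximable (adag (coh 0)) j.
Proof.
  intros Hj [Hzero | Happrox].
  - specialize (Hzero 1%nat). rewrite adag_coh_0 in Hzero.
    apply (f_equal fst) in Hzero. simpl in Hzero. lra.
  - destruct (Happrox (1 / 2)) as (phi & Hrank & Hfid); [lra|].
    destruct (coh_rank_le_1_inv phi j ltac:(lia) Hrank) as (c & beta & Hc & ->).
    rewrite fidelity_one_photon_coh in Hfid by exact Hc.
    pose proof (exp_neg_mul_le_half (Cmod beta ^ 2) (pow2_ge_0 _)). lra.
Qed.

Lemma approx_coh_rank_le_of_approximable (psi : state) (k : nat) :
  approximable psi k -> approx_coh_rank_le psi k.
Proof.
  induction k as [k IH] using (well_founded_induction Wf_nat.lt_wf). intros Hk.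
  destruct (classic (exists j, (j < k)%nat /\ approximable psi j)) as [(j & Hjk & Hj) | Hmin].
  - destruct (IH j Hjk Hj) as (i & Hij & Hi). exists i. split; [lia | exact Hi].
  - exists k. split; [lia|]. split; [exact Hk|]. intros j Hjk Hj. apply Hmin. exists j. auto.
Qed.

Theorem corollary2 :
  op_approx_coh_rank adag 2 /\
  (forall (n : nat) (b : nat -> C), op_approx_coh_rank_le (poly_adag b n) (n + 1)).
Proof.
  split; [split|].
  - intros alpha. apply approx_coh_rank_le_of_approximable, adag_coh_approximable.
  - exists 0%C. split; [apply adag_coh_approximable | apply adag_coh_0_not_approximable].
  - intros n b alpha. apply approx_coh_rank_le_of_approximable, poly_adag_coh_approximable.
Qed.
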